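(* Let $G$ be a graph, and suppose $G$ has a proper coloring with $\chi(G)$ color classes $V_1,\ldots,V_{\chi(G)}$, where $V_i=\{v_{i,1},\ldots,v_{i,n(i)}\}$, such that for each color $i$ there is $k(i)\in\{1,\ldots,n(i)\}$ with $N_G(v_{i,1})\supseteq\cdots\supseteq N_G(v_{i,k(i)})$ and $N_G(v_{i,k(i)+1})\subseteq\cdots\subseteq N_G(v_{i,n(i)})$ (when $k(i)=n(i)$ only the first chain is required). Then $\operatorname{box}(G)\le\chi(G)$.
   Context: All graphs are finite, simple and undirected. $N_G(v)$ is the set of neighbors of $v$ in $G$. A box in $\mathbb{R}^k$ is a Cartesian product of $k$ closed intervals of the real line. The boxicity $\operatorname{box}(G)$ is the minimum nonnegative integer $k$ such that $G$ is isomorphic to the intersection graph of a family of boxes in $\mathbb{R}^k$. $\chi(G)$ is the chromatic number of $G$. *)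

From Stdlib Require Import Reals.
From mathcomp Require Import all_boot.
Set Implicit Arguments. Unset Strict Implicit. Unset Printing Implicit Defensive.

(* A finite simple graph: vertex type T : finType, adjacency e : rel T,
   assumed symmetric and irreflexive (as hypotheses of the theorem). *)

Definition nbhd (T : finType) (e : rel T) (v : T) : {set T} := [set u | e v u].

Definition proper_coloring (T : finType) (e : rel T) (k : nat) (c : T -> 'I_k) : Prop :=
  forall x y, e x y -> c x != c y.

Definition colorableb (T : finType) (e : rel T) (k : nat) : bool :=
  [exists f : {ffun T -> 'I_k}, [forall x, forall y, e x y ==> (f x != f y)]].

Lemma colorable_exists (T : finType) (e : rel T) (irr : irreflexive e) :
  exists k, colorableb e k.
Proof.
exists #|T|; apply/existsP; exists [ffun x => enum_rank x].
apply/forallP => x; apply/forallP => y; apply/implyP => exy.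
rewrite !ffunE; apply/negP => /eqP /enum_rank_inj exy'.
by move: exy; rewrite exy' irr.
Qed.

Definition chi (T : finType) (e : rel T) (irr : irreflexive e) : nat :=
  ex_minn (colorable_exists irr).

Definition is_box (k : nat) (lo hi : nat -> R) : Prop :=
  forall d, (d < k)%N -> Rle (lo d) (hi d).

Definition boxes_meet (k : nat) (lo1 hi1 lo2 hi2 : nat -> R) : Prop :=
  forall d, (d < k)%N -> Rle (lo1 d) (hi2 d) /\ Rle (lo2 d) (hi1 d).

(* G is (isomorphic to) the intersection graph of a family of boxes in R^k,
   the family being indexed by the vertices of G. *)
Definition box_representable (T : finType) (e : rel T) (k : nat) : Prop :=
  exists lo hi : T -> nat -> R,
    (forall v, is_box k (lo v) (hi v)) /\
    (forall u v, u <> v -> (e u v <-> boxes_meet k (lo u) (hi u) (lo v) (hi v))).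

From Stdlib Require Import Reals Lia ClassicalEpsilon.
From mathcomp Require Import all_boot zify.
Set Implicit Arguments. Unset Strict Implicit. Unset Printing Implicit Defensive.

(* One coordinate per colour class V.  Place the vertices of V on the integer
   line as points: the decreasing chain at -1, -2, ..., -k and the increasing
   chain so that its last vertex sits at 1, so that vertices with larger
   neighbourhoods are nearer to 0.  A vertex w outside V gets an interval
   around 0 reaching exactly as far as its neighbours in V; the chain
   conditions make the neighbours of w in each chain an initial segment
   counted from 0.  Two vertices in the same class get disjoint points, two
   vertices outside it get intervals through 0, so adjacency is decided in the
   coordinate of the colour of either endpoint. *)

Definition intervals_meet (lo1 hi1 lo2 hi2 : Z) : Prop :=
  (lo1 <= hi2 /\ lo2 <= hi1)%Z.

Section ChainedClass.
Variables (T : finType) (e : rel T) (s : seq T) (k : nat).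
Hypothesis nbhd_down : forall v0 j, j.+1 < k ->
  nbhd e (nth v0 s j.+1) \subset nbhd e (nth v0 s j).
Hypothesis nbhd_up : forall v0 j, k <= j -> j.+1 < size s ->
  nbhd e (nth v0 s j) \subset nbhd e (nth v0 s j.+1).

Lemma nbhd_nth_antimono v0 i j : i <= j < k ->
  nbhd e (nth v0 s j) \subset nbhd e (nth v0 s i).
Proof.
move=> /andP [ij jk].
have mono := homo_leq_in (D := [pred j | j < k])
  (f := fun j => nbhd e (nth v0 s j)) (r := fun A B => B \subset A)
  (@subxx _ _) (fun B A C AB BC => subset_trans BC AB).
apply: mono (ij); rewrite ?inE //=.
- by move=> a b _ bk c /andP [_ cb]; rewrite inE; exact: ltn_trans cb bk.
- by move=> a _; rewrite inE; exact: nbhd_down.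
- exact: leq_ltn_trans ij jk.
Qed.

Lemma nbhd_nth_mono v0 i j : k <= i <= j -> j < size s ->
  nbhd e (nth v0 s i) \subset nbhd e (nth v0 s j).
Proof.
move=> /andP [ki ij] js.
have mono := homo_leq_in (D := [pred j | k <= j < size s])
  (f := fun j => nbhd e (nth v0 s j)) (r := fun A B => A \subset B) (@subxx _ _)
  (fun B A C AB BC => subset_trans AB BC).
apply: mono (ij); rewrite ?inE ?ki ?js //=.
- move=> a b; rewrite !inE => /andP [ka _] /andP [_ bs] c /andP [ac cb].
  by rewrite inE; apply/andP; split; lia.
- by move=> a; rewrite !inE => /andP [ka _] /andP [_ a1s]; exact: nbhd_up.
- exact: leq_ltn_trans ij js.
- by rewrite andbT (leq_trans ki ij).
Qed.

Definition chain_coord (j : nat) : Z :=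
  if j < k then (- (Z.of_nat j + 1))%Z else Z.of_nat (size s - j).

Definition reach_left (w : T) : nat :=
  \max_(j < size s | (j < k) && e (nth w s j) w) j.+1.

Definition reach_right (w : T) : nat :=
  \max_(j < size s | (k <= j) && e (nth w s j) w) (size s - j).

Lemma edge_nth_left w j : j < k -> j < size s ->
  e (nth w s j) w = (j < reach_left w).
Proof.
move=> jk js; apply/idP/idP => [ejw|].
  by apply: (leq_bigmax_cond (Ordinal js)); rewrite /= jk.
apply: contraTT => nejw; rewrite -leqNgt.
rewrite /reach_left; apply/bigmax_leqP => i /andP [ik eiw].
rewrite ltnNge; apply: contra nejw => ji.
have jik : j <= i < k by rewrite ji ik.
by have := subsetP (nbhd_nth_antimono w jik) w; rewrite !in_set; apply.
Qed.

Lemma edge_nth_right w j : k <= j -> j < size s ->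
  e (nth w s j) w = (size s - j <= reach_right w).
Proof.
move=> kj js; apply/idP/idP => [ejw|].
  by apply: (leq_bigmax_cond (Ordinal js)); rewrite /= kj.
apply: contraTT => nejw; suff: reach_right w <= (size s - j).-1 by lia.
rewrite /reach_right; apply/bigmax_leqP => i /andP [ki eiw].
case: (ltnP j i) => [ji|ij]; first lia.
have kij : k <= i <= j by rewrite ki ij.
have := subsetP (nbhd_nth_mono w kij js) w.
by rewrite !in_set (negbTE nejw) => /(_ eiw).
Qed.

Lemma edge_iff_chain_coord u w : u \in s ->
  e u w <-> (- Z.of_nat (reach_left w) <= chain_coord (index u s)
             <= Z.of_nat (reach_right w))%Z.
Proof.
move=> us; have js : index u s < size s by rewrite index_mem.
rewrite -{1}(nth_index w us) /chain_coord.
case: ltnP => jk; first rewrite (edge_nth_left w jk js);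
  last rewrite (edge_nth_right w jk js); split => /= h; lia.
Qed.

Definition class_lo (v : T) : Z :=
  if v \in s then chain_coord (index v s) else (- Z.of_nat (reach_left v))%Z.

Definition class_hi (v : T) : Z :=
  if v \in s then chain_coord (index v s) else Z.of_nat (reach_right v).

Lemma class_lo_le_hi v : (class_lo v <= class_hi v)%Z.
Proof. by rewrite /class_lo /class_hi; case: ifP => _; lia. Qed.

Lemma class_meet_of_edge u v : symmetric e -> e u v ->
  ~~ ((u \in s) && (v \in s)) ->
  intervals_meet (class_lo u) (class_hi u) (class_lo v) (class_hi v).
Proof.
move=> esym euv; rewrite /intervals_meet /class_lo /class_hi.
case us: (u \in s); case vs: (v \in s) => // _; last lia.
  by have := proj1 (edge_iff_chain_coord v us) euv; lia.
by rewrite esym in euv; have := proj1 (edge_iff_chain_coord u vs) euv; lia.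
Qed.

Lemma chain_coord_inj i j : i < size s -> j < size s ->
  chain_coord i = chain_coord j -> i = j.
Proof. by rewrite /chain_coord => ? ?; case: ifP; case: ifP; lia. Qed.

Lemma class_edge_of_meet u v : u \in s -> u != v ->
  intervals_meet (class_lo u) (class_hi u) (class_lo v) (class_hi v) -> e u v.
Proof.
rewrite /intervals_meet /class_lo /class_hi => us /negP uv; rewrite us.
case vs: (v \in s) => /= meet; last by apply/(edge_iff_chain_coord v us); lia.
have same_index : index u s = index v s.
  by apply: chain_coord_inj; [rewrite index_mem | rewrite index_mem vs | lia].
by case: uv; rewrite -(nth_index u us) same_index nth_index ?vs.
Qed.

End ChainedClass.

Lemma box_representable_of_intervals (T : finType) (e : rel T) (n : nat)
    (lo hi : 'I_n -> T -> Z) :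
  (forall i v, (lo i v <= hi i v)%Z) ->
  (forall u v, u <> v ->
     e u v <-> forall i, intervals_meet (lo i u) (hi i u) (lo i v) (hi i v)) ->
  box_representable e n.
Proof.
move=> lo_le_hi edgeE.
pose coord (f : 'I_n -> T -> Z) v d :=
  if insub d is Some i then IZR (f i v) else IZR 0.
exists (coord lo), (coord hi); split=> [v d dn|u v uv].
  by rewrite /coord insubT; apply: IZR_le.
rewrite edgeE //; split=> [meet d dn|meet i].
  by rewrite /coord insubT; have [] := meet (Ordinal dn); split; apply: IZR_le.
have [] := meet i (ltn_ord i); rewrite /coord valK.
by split; apply: le_IZR.
Qed.

Theorem corollary3p3 (T : finType) (e : rel T)
  (esym : symmetric e) (eirr : irreflexive e)
  (c : T -> 'I_(chi eirr)) (cproper : proper_coloring e c)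
  (hchain : forall i : 'I_(chi eirr),
     exists (s : seq T) (k : nat),
       [/\ uniq s, (forall v, v \in s <-> c v = i),
           (1 <= k <= size s)%N,
           (forall (v0 : T) j, (j.+1 < k)%N ->
              nbhd e (nth v0 s j.+1) \subset nbhd e (nth v0 s j)) &
           (forall (v0 : T) j, (k <= j)%N -> (j.+1 < size s)%N ->
              nbhd e (nth v0 s j) \subset nbhd e (nth v0 s j.+1))]) :
  exists k, (k <= chi eirr)%N /\ box_representable e k.
Proof.
have [S hS] := choice _ hchain; have [K hK] := choice _ hS.
exists (chi eirr); split => //.
apply: (@box_representable_of_intervals _ _ _
  (fun i => class_lo e (S i) (K i)) (fun i => class_hi e (S i) (K i)))
  => [i v|u v uv]; first exact: class_lo_le_hi.
split=> [euv i|meet].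
  have [_ inS _ down up] := hK i.
  apply: class_meet_of_edge down up _ _ esym (euv) _.
  apply/negP => /andP [/inS cu /inS cv].
  by have := cproper _ _ euv; rewrite cu cv eqxx.
have [_ inS _ down up] := hK (c u).
apply: class_edge_of_meet down up _ _ _ _ (meet (c u)).
- exact/inS.
- exact/eqP.
Qed.
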